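(* Let $T$ be a tree that is not isomorphic to the path $P_2$. Then the following statements are equivalent: (i) $\gamma_M(T)=\ell(T)$; (ii) $\gamma(T)=|\mathcal S(T)|$; (iii) for every vertex $u\in V(T)$ there is a leaf of $T$ at distance at most $2$ from $u$.
   Context: All graphs are finite, simple, undirected and connected; $d(u,v)$ is the shortest-path distance. A set $S\subseteq V(G)$ is a resolving set if for all distinct $x,y\in V(G)$ there is $u\in S$ with $d(u,x)\neq d(u,y)$. A set $S$ is dominating if every vertex not in $S$ has a neighbor in $S$; $\gamma(G)$ is the minimum size of a dominating set. A metric-locating-dominating set (MLD-set) is a set that is both resolving and dominating; $\gamma_M(G)$ is the minimum size of an MLD-set. In a tree $T$, a leaf is a vertex of degree 1, $\ell(T)$ is the number of leaves, a support vertex is a vertex adjacent to some leaf, and $\mathcal S(T)$ is the set of support vertices. *)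

From mathcomp Require Import all_boot.
Set Implicit Arguments. Unset Strict Implicit. Unset Printing Implicit Defensive.

Section Graphs.
Variable T : finType.
Variable e : rel T.

Definition simple_graph := symmetric e /\ irreflexive e.
Definition connected_graph := forall x y : T, connect e x y.
Definition acyclic := ~ exists c : seq T, [&& 2 < size c, uniq c & cycle e c].
Definition is_tree := [/\ 0 < #|T|, simple_graph, connected_graph & acyclic].

Definition walk_of_len (u v : T) (k : nat) : bool :=
  [exists t : k.-tuple T, path e u t && (last u t == v)].

(* shortest-path distance: least k with a walk (hence a path) of length k;
   shortest paths have length < #|T| in a connected graph *)
Definition dist (u v : T) : nat := find (walk_of_len u v) (iota 0 #|T|).

Definition resolving (S : {set T}) : bool :=
  [forall x, forall y, (x != y) ==> [exists u in S, dist u x != dist u y]].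
Definition dominating (S : {set T}) : bool :=
  [forall v, (v \notin S) ==> [exists u in S, e u v]].

Definition gamma : nat := #|[arg min_(S < [set: T] | dominating S) #|S|]|.
Definition gammaM : nat :=
  #|[arg min_(S < [set: T] | resolving S && dominating S) #|S|]|.

Definition leaf (x : T) : bool := #|[set y | e x y]| == 1.
Definition nleaves : nat := #|[set x | leaf x]|.
Definition support_set : {set T} := [set x | [exists y, leaf y && e x y]].

Definition iso_P2 : Prop :=
  exists f : T -> 'I_2, bijective f /\ forall x y, e x y = (f x != f y).
End Graphs.

From mathcomp Require Import all_boot.
Set Implicit Arguments. Unset Strict Implicit. Unset Printing Implicit Defensive.

(* A tree without leaves is a single vertex, where all three statements fail; otherwise,
   as T is not P_2, no two leaves are adjacent. A dominating set D contains, for every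
   support vertex s, either s or its pendant leaf, which gives |S| <= gamma; a resolving
   dominating set contains, for every leaf a, either a or its support vertex, and distinct
   leaves not in D have distinct supports since twin leaves are only told apart by
   themselves, which gives l <= gammaM. In both cases equality forces D inside S u L, and a
   dominating set inside S u L places every vertex within distance 2 of a leaf. Conversely,
   under (iii) the support vertices dominate, and together with all leaves but one at each
   support vertex they resolve T: two unresolved vertices x, y would share a support
   neighbour u, and if x is not a leaf, the support vertex near a neighbour z <> u of x
   sees x at distance 2 and y at distance 4, unless T contains a cycle. *)

Section Walks.
Variables (T : finType) (e : rel T).

Lemma walk_of_lenP u v k :
  reflect (exists s : seq T, [/\ size s = k, path e u s & last u s = v])
          (walk_of_len e u v k).
Proof.
apply: (iffP existsP) => [[t /andP[Hp /eqP Hl]]|[s [Hs Hp Hl]]].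
  by exists (val t); rewrite size_tuple.
have Hs' : size s == k by rewrite Hs.
by exists (Tuple Hs'); rewrite /= Hp Hl eqxx.
Qed.

Lemma walk_of_len0 u v : walk_of_len e u v 0 = (u == v).
Proof.
apply/walk_of_lenP/eqP => [[s [Hs _ <-]]|<-]; last by exists [::].
by case: s Hs.
Qed.

Lemma walk_of_len1 u v : walk_of_len e u v 1 = e u v.
Proof.
apply/walk_of_lenP/idP => [[s [Hs Hp <-]]|H]; last by exists [:: v]; rewrite /= H.
by case: s Hs Hp => [|a [|]]//= _ /andP[].
Qed.

Lemma walk_of_len2 u v : walk_of_len e u v 2 = [exists t, e u t && e t v].
Proof.
apply/walk_of_lenP/existsP => [[s [Hs Hp <-]]|[t /andP[H1 H2]]].
  by case: s Hs Hp => [|a [|b [|]]]//= _ /and3P[H1 H2 _]; exists a; rewrite H1.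
by exists [:: t; v]; rewrite /= H1 H2.
Qed.

Lemma distE u v : 2 < #|T| ->
  dist e u v = if u == v then 0 else if e u v then 1 else
     if [exists t, e u t && e t v] then 2 else
     (find (walk_of_len e u v) (iota 3 (#|T| - 3))).+3.
Proof.
move=> card_gt2; rewrite /dist.
have -> : iota 0 #|T| = [:: 0, 1, 2 & iota 3 (#|T| - 3)].
  by rewrite -{1}(subnKC card_gt2).
by rewrite /= walk_of_len0 walk_of_len1 walk_of_len2; do 3 case: ifP => //.
Qed.

Lemma dist_eq0 u v : 0 < #|T| -> (dist e u v == 0) = (u == v).
Proof.
by rewrite /dist; case: #|T| => // n _; rewrite [iota _ _]/= /= walk_of_len0; case: (u == v).
Qed.

End Walks.

Section DominationNumbers.
Variables (T : finType) (e : rel T).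

Lemma dominatingT : dominating e [set: T].
Proof. by apply/forallP => v; rewrite inE. Qed.

Lemma resolvingT : resolving e [set: T].
Proof.
apply/forallP => x; apply/forallP => y; apply/implyP => xy.
apply/exists_inP; exists x; rewrite ?inE //.
have T_gt0 : 0 < #|T| by apply/card_gt0P; exists x.
have /eqP -> : dist e x x == 0 by rewrite dist_eq0.
by rewrite eq_sym dist_eq0.
Qed.

Lemma gamma_leq (S : {set T}) : dominating e S -> gamma e <= #|S|.
Proof. by rewrite /gamma; case: arg_minnP => [|D _ H]; [exact: dominatingT | exact: H]. Qed.

Lemma gamma_witness : exists2 S : {set T}, dominating e S & #|S| = gamma e.
Proof. by rewrite /gamma; case: arg_minnP => [|D H _]; [exact: dominatingT | exists D]. Qed.

Lemma gammaM_leq (S : {set T}) :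
  resolving e S -> dominating e S -> gammaM e <= #|S|.
Proof.
move=> resS domS; rewrite /gammaM; case: arg_minnP => [|D _ H].
  by rewrite resolvingT dominatingT.
by apply: H; rewrite resS.
Qed.

Lemma gammaM_witness :
  exists2 S : {set T}, resolving e S && dominating e S & #|S| = gammaM e.
Proof.
rewrite /gammaM; case: arg_minnP => [|D H _]; last by exists D.
by rewrite resolvingT dominatingT.
Qed.

Lemma dominating_card_gt0 (S : {set T}) : 0 < #|T| -> dominating e S -> 0 < #|S|.
Proof.
case/card_gt0P => x _ /forallP/(_ x) domx; apply/card_gt0P.
case: (boolP (x \in S)) => [xS|xS]; first by exists x.
by move: domx; rewrite xS => /exists_inP[u uS _]; exists u.
Qed.

Lemma dominating_subset (A B : {set T}) :
  dominating e A -> A \subset B -> dominating e B.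
Proof.
move=> domA /subsetP AB; apply/forallP => v; apply/implyP => vB.
have vA : v \notin A by apply: contra vB; apply: AB.
move/forallP/(_ v): domA; rewrite vA /= => /exists_inP[u uA Euv].
by apply/exists_inP; exists u => //; apply: AB.
Qed.

End DominationNumbers.

Lemma card_leq_inj_subset (aT rT : finType) (A : {set aT}) (D X : {set rT})
    (f : aT -> rT) :
  {in A &, injective f} -> {in A, forall a, f a \in D} ->
  {in A, forall a, f a \in X} ->
  #|A| <= #|D| /\ (#|A| = #|D| -> D \subset X).
Proof.
move=> f_inj fAD fAX.
have fA_D : f @: A \subset D by apply/subsetP => _ /imsetP[a Aa ->]; apply: fAD.
have card_fA : #|f @: A| = #|A| by apply: card_in_imset.
split=> [|eq_AD]; first by rewrite -card_fA subset_leq_card.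
have <- : f @: A = D by apply/eqP; rewrite eqEcard fA_D card_fA eq_AD leqnn.
by apply/subsetP => _ /imsetP[a Aa ->]; apply: fAX.
Qed.

Section Leaves.
Variables (T : finType) (e : rel T).
Hypothesis e_sym : symmetric e.

Definition leaves := [set x | leaf e x].
Definition support_of (a : T) := odflt a [pick y | e a y].
Definition leaf_of (s : T) := odflt s [pick y | leaf e y && e s y].

Lemma leaf_neighbor x : leaf e x -> exists y, e x y.
Proof.
rewrite /leaf => /cards1P[y Ny]; exists y.
have : y \in [set y0 | e x y0] by rewrite Ny set11.
by rewrite inE.
Qed.

Lemma leaf_neighbor_uniq x y z : leaf e x -> e x y -> e x z -> y = z.
Proof.
rewrite /leaf => /cards1P[w Nw] Exy Exz.
have : y \in [set y0 | e x y0] by rewrite inE.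
have : z \in [set y0 | e x y0] by rewrite inE.
by rewrite Nw !inE => /eqP-> /eqP->.
Qed.

Lemma nonleaf_other_neighbor x u :
  ~~ leaf e x -> e x u -> exists2 z, e x z & z != u.
Proof.
move=> Lx Exu; apply/exists_inP; apply: contraNT Lx => /exists_inPn others.
rewrite /leaf; apply/cards1P; exists u; apply/setP => z.
rewrite !inE; apply/idP/eqP => [Exz|-> //].
by apply/eqP; rewrite -[_ == _]negbK others.
Qed.

Lemma support_ofP a : leaf e a -> e a (support_of a).
Proof.
case/leaf_neighbor => y Eay; rewrite /support_of.
by case: pickP => [z //|/(_ y)]; rewrite Eay.
Qed.

Lemma leaf_ofP s : s \in support_set e -> leaf e (leaf_of s) && e s (leaf_of s).
Proof.
rewrite inE => /existsP[y Ly]; rewrite /leaf_of.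
by case: pickP => [z //|/(_ y)]; rewrite Ly.
Qed.

Lemma leaf_of_inj : {in support_set e &, injective leaf_of}.
Proof.
move=> s t Ss St eq_st.
case/andP: (leaf_ofP Ss) => Ls Es; case/andP: (leaf_ofP St) => _ Et.
by apply: (leaf_neighbor_uniq Ls); rewrite e_sym // eq_st.
Qed.

Lemma twin_leaves_walk a b s u k : leaf e a -> e s a -> e s b -> u != a ->
  walk_of_len e u a k -> walk_of_len e u b k.
Proof.
move=> La Esa Esb ua /walk_of_lenP[p [size_p path_p last_p]]; apply/walk_of_lenP.
case/lastP: p size_p path_p last_p => [_ _ /= ua'|p x]; first by rewrite ua' eqxx in ua.
rewrite last_rcons rcons_path size_rcons => size_p /andP[path_p Ex] xa; subst x.
have last_s : last u p = s by apply: (leaf_neighbor_uniq La); rewrite e_sym.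
by exists (rcons p b); rewrite size_rcons rcons_path last_rcons path_p last_s Esb.
Qed.

Lemma twin_leaves_dist a b s u : leaf e a -> leaf e b -> e s a -> e s b ->
  u != a -> u != b -> dist e u a = dist e u b.
Proof.
move=> La Lb Esa Esb ua ub; rewrite /dist; apply: eq_find => k.
by apply/idP/idP; [apply: (twin_leaves_walk La Esa) | apply: (twin_leaves_walk Lb Esb)].
Qed.

Lemma support_of_mem a : leaf e a -> support_of a \in support_set e.
Proof.
by move=> La; rewrite inE; apply/existsP; exists a; rewrite La e_sym support_ofP.
Qed.

Hypothesis leaves_nonadj : forall a b, leaf e a -> leaf e b -> ~~ e a b.

Lemma support_nonleaf s : s \in support_set e -> ~~ leaf e s.
Proof.
rewrite inE => /existsP[y /andP[Ly Esy]]; apply/negP => Ls.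
by move: (leaves_nonadj Ls Ly); rewrite Esy.
Qed.

Lemma support_leq_dominating (D : {set T}) : dominating e D ->
  #|support_set e| <= #|D| /\
  (#|support_set e| = #|D| -> D \subset support_set e :|: leaves).
Proof.
move=> domD.
have leaf_ofD s : s \in support_set e -> s \notin D -> leaf_of s \in D.
  move=> Ss sD; case/andP: (leaf_ofP Ss) => Ls Es; apply: contraT => lD.
  move/forallP/(_ (leaf_of s)): domD; rewrite lD /= => /exists_inP[u uD Eu].
  have us : u = s by apply: (leaf_neighbor_uniq Ls); rewrite e_sym.
  by rewrite us (negbTE sD) in uD.
apply: (@card_leq_inj_subset _ _ _ _ _ (fun s => if s \in D then s else leaf_of s)).
- move=> s t Ss St /=; case: ifPn => sD; case: ifPn => tD // eq_st.
  + by case/andP: (leaf_ofP St); rewrite -eq_st (negbTE (support_nonleaf Ss)).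
  + by case/andP: (leaf_ofP Ss); rewrite eq_st (negbTE (support_nonleaf St)).
  + exact: leaf_of_inj.
- by move=> s Ss /=; case: ifPn => // sD; apply: leaf_ofD.
- move=> s Ss /=; rewrite in_setU; case: ifP => _; first by rewrite Ss.
  by case/andP: (leaf_ofP Ss) => Ls _; rewrite [_ \in leaves]inE Ls orbT.
Qed.

Lemma leaves_leq_metric_dominating (D : {set T}) :
  resolving e D -> dominating e D ->
  #|leaves| <= #|D| /\ (#|leaves| = #|D| -> D \subset support_set e :|: leaves).
Proof.
move=> resD domD.
have support_ofD a : leaf e a -> a \notin D -> support_of a \in D.
  move=> La aD; move/forallP/(_ a): domD; rewrite aD /= => /exists_inP[u uD Eua].
  suff <- : u = support_of a by [].
  by apply: (leaf_neighbor_uniq La); [rewrite e_sym | apply: support_ofP].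
apply: (@card_leq_inj_subset _ _ _ _ _ (fun a => if a \in D then a else support_of a)).
- move=> a b; rewrite !inE => La Lb /=.
  case: ifPn => aD; case: ifPn => bD // eq_ab.
  + by move: (leaves_nonadj Lb La); rewrite eq_ab (support_ofP Lb).
  + by move: (leaves_nonadj La Lb); rewrite -eq_ab (support_ofP La).
  + apply/eqP; apply: contraT => ab.
    move/forallP/(_ a)/forallP/(_ b): resD; rewrite ab /= => /exists_inP[u uD].
    have ua : u != a by apply: contraNneq aD => <-.
    have ub : u != b by apply: contraNneq bD => <-.
    have Ea : e (support_of a) a by rewrite e_sym support_ofP.
    have Eb : e (support_of a) b by rewrite eq_ab e_sym support_ofP.
    by rewrite (twin_leaves_dist La Lb Ea Eb ua ub) eqxx.
- by move=> a; rewrite inE /= => La; case: ifPn => // aD; apply: support_ofD.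
- move=> a; rewrite inE /= in_setU => La; case: ifP => _.
    by rewrite [_ \in leaves]inE La orbT.
  by rewrite support_of_mem.
Qed.

(* Under (iii) this set of size [#|leaves|] is metric-locating-dominating. *)
Definition support_mld :=
  support_set e :|: (leaves :\: leaf_of @: support_set e).

Lemma card_support_mld : #|support_mld| = #|leaves|.
Proof.
have chosen_leaves : leaf_of @: support_set e \subset leaves.
  by apply/subsetP => _ /imsetP[s Ss ->]; case/andP: (leaf_ofP Ss); rewrite inE.
have card_chosen : #|leaf_of @: support_set e| = #|support_set e|.
  exact: card_in_imset leaf_of_inj.
have disj : [disjoint support_set e & leaves :\: leaf_of @: support_set e].
  apply/pred0P => x /=; apply/negbTE/andP => -[/support_nonleaf /negbTE nLx].
  by rewrite !inE nLx andbF.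
rewrite /support_mld cardsU (disjoint_setI0 disj) cards0 subn0 cardsD.
by rewrite (setIidPr chosen_leaves) card_chosen subnKC // -card_chosen subset_leq_card.
Qed.

Lemma support_in_mld s : s \in support_set e -> s \in support_mld.
Proof. by move=> Ss; rewrite in_setU Ss. Qed.

Lemma leaf_notin_mld a u :
  leaf e a -> a \notin support_mld -> e u a -> a = leaf_of u.
Proof.
move=> La; rewrite !in_setU in_setD [a \in leaves]inE La andbT negb_or negbK.
case/andP=> _ /imsetP[s Ss ->] Eus; case/andP: (leaf_ofP Ss) => Ls Es.
by congr leaf_of; apply: (leaf_neighbor_uniq Ls); rewrite e_sym.
Qed.

Hypotheses (e_irr : irreflexive e) (card_gt2 : 2 < #|T|).

Lemma adj_neq x y : e x y -> x != y.
Proof. by apply: contraTneq => ->; rewrite e_irr. Qed.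

Lemma dist_eq1 u v : (dist e u v == 1) = e u v.
Proof.
rewrite distE //; case: (u =P v) => [->|_]; first by rewrite e_irr.
by case: (e u v) => //; case: ifP.
Qed.

Lemma dist_eq2 u v :
  (dist e u v == 2) = [&& u != v, ~~ e u v & [exists t, e u t && e t v]].
Proof. by rewrite distE //; case: (u =P v) => //= _; case: (e u v) => //=; case: ifP. Qed.

Lemma dist_leq2 u v :
  (dist e u v <= 2) = [|| u == v, e u v | [exists t, e u t && e t v]].
Proof. by rewrite distE //; case: (u == v) => //; case: (e u v) => //; case: ifP. Qed.

Definition within2_of_leaf := forall u, exists2 w, leaf e w & dist e u w <= 2.

Lemma within2_of_leafP v :
  (exists2 w, leaf e w & dist e v w <= 2) <->
  [\/ leaf e v, v \in support_set e | exists2 s, s \in support_set e & e v s].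
Proof.
have support_of_adj s w : leaf e w -> e s w -> s \in support_set e.
  by move=> Lw Esw; rewrite inE; apply/existsP; exists w; rewrite Lw.
split=> [[w Lw]|].
  rewrite dist_leq2 => /or3P[/eqP ->|Evw|/existsP[s /andP[Evs Esw]]].
  - by apply: Or31.
  - by apply: Or32; apply: support_of_adj Evw.
  - by apply: Or33; exists s => //; apply: support_of_adj Esw.
case=> [Lv|Sv|[s Ss Evs]].
- by exists v; rewrite // dist_leq2 eqxx.
- move: Sv; rewrite inE => /existsP[w /andP[Lw Evw]].
  by exists w; rewrite // dist_leq2 Evw orbT.
- move: Ss; rewrite inE => /existsP[w /andP[Lw Esw]]; exists w; rewrite // dist_leq2.
  by apply/or3P; apply: Or33; apply/existsP; exists s; rewrite Evs.
Qed.

Lemma support_dominating : within2_of_leaf -> dominating e (support_set e).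
Proof.
move=> near; apply/forallP => v; apply/implyP => vS.
case: (within2_of_leafP v).1 => [|Lv|Sv|[s Ss Evs]]; first exact: near.
- apply/exists_inP; exists (support_of v); first exact: support_of_mem.
  by rewrite e_sym support_ofP.
- by rewrite Sv in vS.
- by apply/exists_inP; exists s; rewrite // e_sym.
Qed.

Lemma within2_of_dominating_subset (D : {set T}) :
  dominating e D -> D \subset support_set e :|: leaves -> within2_of_leaf.
Proof.
move=> domD /subsetP DX u; apply/within2_of_leafP.
case: (boolP (u \in D)) => [uD|uD].
  by case/setUP: (DX u uD) => [Su|]; [apply: Or32 | rewrite inE => Lu; apply: Or31].
move/forallP/(_ u): domD; rewrite uD /= => /exists_inP[v vD Evu].
case/setUP: (DX v vD) => [Sv|]; first by apply: Or33; exists v; rewrite // e_sym.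
rewrite inE => Lv; apply: Or32; rewrite inE; apply/existsP; exists v.
by rewrite Lv e_sym.
Qed.

Hypothesis e_acyclic : acyclic e.

Lemma triangle_free a b c : e a b -> e b c -> ~~ e c a.
Proof.
move=> Eab Ebc; apply/negP => Eca; apply: e_acyclic; exists [:: a; b; c].
have ca := adj_neq Eca.
by rewrite /= !inE !negb_or (adj_neq Eab) (adj_neq Ebc) eq_sym ca Eab Ebc Eca.
Qed.

Lemma square_free a b c d : a != c -> e a b -> e b c -> e c d -> e d a -> b = d.
Proof.
move=> ac Eab Ebc Ecd Eda; apply/eqP; apply: contraT => bd; exfalso.
apply: e_acyclic; exists [:: a; b; c; d].
have da := adj_neq Eda.
rewrite /= !inE !negb_or ac bd (adj_neq Eab) (adj_neq Ebc) (adj_neq Ecd).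
by rewrite eq_sym da Eab Ebc Ecd Eda.
Qed.

Lemma equidistant_notin (A : {set T}) x y :
  x != y -> {in A, forall v, dist e v x = dist e v y} -> x \notin A.
Proof.
have T_gt0 : 0 < #|T| by apply: ltnW (ltnW card_gt2).
move=> xy equi; apply: contra xy => xA; move/eqP: (equi x xA).
have /eqP -> : dist e x x == 0 by rewrite dist_eq0.
by rewrite eq_sym dist_eq0.
Qed.

Section Equidistant.
Variables x y u : T.
Hypotheses (xD : x \notin support_mld) (yD : y \notin support_mld) (xy : x != y).
Hypotheses (Eux : e u x) (Euy : e u y).
Hypothesis equi : {in support_mld, forall v, dist e v x = dist e v y}.
Hypothesis near : within2_of_leaf.

Lemma equidistant_adj v : v \in support_mld -> e v x -> e v y.
Proof. by move=> vD; rewrite -!dist_eq1 equi. Qed.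

(* A support vertex [s] beyond a neighbour [z] of [x] sees [x] at distance 2, hence [y] too,
   which closes the cycle [x z s t y u]. *)
Lemma far_support_false z s :
  e x z -> z != u -> e z s -> s \in support_set e -> False.
Proof.
move=> Exz zu Ezs Ss; have sD := support_in_mld Ss.
have sx : s != x by apply: contraNneq xD => <-.
have sy : s != y by apply: contraNneq yD => <-.
have Exy : ~~ e x y by apply: (triangle_free _ Eux); rewrite e_sym.
have Ezy : ~~ e z y.
  by apply: contra zu => Ezy; apply/eqP/(square_free xy Exz Ezy) => //; rewrite e_sym.
have dist_sx : dist e s x = 2.
  apply/eqP; rewrite dist_eq2 sx (triangle_free Exz Ezs).
  by apply/existsP; exists z; rewrite e_sym Ezs e_sym Exz.
have := equi sD; rewrite dist_sx => /esym/eqP.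
rewrite dist_eq2 => /and3P[_ _ /existsP[t /andP[Est Ety]]].
have xt : x != t by apply: contraNneq Exy => ->.
have zt : z != t by apply: contraNneq Ezy => ->.
have zy : z != y by apply: contraNneq Exy => <-.
have su : s != u.
  by apply: contraTneq Eux => su; rewrite -su (triangle_free Exz Ezs).
have tu : t != u.
  apply: contra zu => /eqP tu; rewrite eq_sym in sx.
  by apply/eqP/(square_free sx Exz Ezs) => //; rewrite -tu.
have xs : x != s by rewrite eq_sym.
have xu : x != u by rewrite eq_sym adj_neq.
have yu : y != u by rewrite eq_sym adj_neq.
apply: e_acyclic; exists [:: x; z; s; t; y; u].
rewrite /= !inE !negb_or Exz Ezs Est Ety Eux e_sym Euy.
rewrite (adj_neq Exz) (adj_neq Ezs) (adj_neq Est) (adj_neq Ety).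
by rewrite xs xt xy xu zt zy zu sy su tu yu.
Qed.

Lemma nonleaf_equidistant_false : ~~ leaf e x -> False.
Proof.
move=> Lx; have Exu : e x u by rewrite e_sym.
have [z Exz zu] := nonleaf_other_neighbor Lx Exu.
have Lz : ~~ leaf e z.
  apply: contra xD => Lz; apply: support_in_mld.
  by rewrite inE; apply/existsP; exists z; rewrite Lz.
have Ezy : ~~ e z y.
  by apply: contra zu => Ezy; apply/eqP/(square_free xy Exz Ezy) => //; rewrite e_sym.
case: (within2_of_leafP z).1 => [|Lz'|Sz|[s Ss Ezs]]; first exact: near.
- by rewrite Lz' in Lz.
- by move: Ezy; rewrite (equidistant_adj (support_in_mld Sz)) // e_sym.
- exact: (far_support_false Exz zu Ezs Ss).
Qed.

End Equidistant.

Lemma support_mld_resolving : within2_of_leaf -> resolving e support_mld.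
Proof.
move=> near; apply/forallP => x; apply/forallP => y; apply/implyP => xy.
apply: contraT => /exists_inPn unresolved; exfalso.
have equi : {in support_mld, forall v, dist e v x = dist e v y}.
  by move=> v /unresolved; rewrite negbK => /eqP.
have yx : y != x by rewrite eq_sym.
have xD := equidistant_notin xy equi.
have yD : y \notin support_mld by apply: (equidistant_notin yx) => v /equi.
have [u Su Eux] : exists2 u, u \in support_set e & e u x.
  have xS : x \notin support_set e by apply: contra xD; apply: support_in_mld.
  by move/forallP/(_ x): (support_dominating near); rewrite xS => /exists_inP.
have Euy := equidistant_adj equi (support_in_mld Su) Eux.
have [Lx|nLx] := boolP (leaf e x); last first.
  exact: (nonleaf_equidistant_false xD yD xy Eux Euy equi near nLx).
have [Ly|nLy] := boolP (leaf e y); last first.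
  by apply: (nonleaf_equidistant_false yD xD yx Euy Eux _ near nLy) => v /equi.
by move: xy; rewrite (leaf_notin_mld Lx xD Eux) (leaf_notin_mld Ly yD Euy) eqxx.
Qed.

Lemma gamma_support_iff : gamma e = #|support_set e| <-> within2_of_leaf.
Proof.
split=> [|near].
  have [D domD <-] := gamma_witness e => eq_card.
  have [_ /(_ (esym eq_card)) DX] := support_leq_dominating domD.
  exact: within2_of_dominating_subset domD DX.
apply/eqP; rewrite eqn_leq gamma_leq ?support_dominating //=.
have [D domD <-] := gamma_witness e.
by case: (support_leq_dominating domD).
Qed.

Lemma gammaM_leaves_iff : gammaM e = nleaves e <-> within2_of_leaf.
Proof.
split=> [|near].
  have [D /andP[resD domD] <-] := gammaM_witness e => eq_card.
  have [_ /(_ (esym eq_card)) DX] := leaves_leq_metric_dominating resD domD.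
  exact: within2_of_dominating_subset domD DX.
have domD : dominating e support_mld.
  exact: dominating_subset (support_dominating near) (subsetUl _ _).
apply/eqP; rewrite eqn_leq -[nleaves e]/#|leaves| -card_support_mld.
rewrite gammaM_leq ?support_mld_resolving //= card_support_mld.
have [D /andP[resD domD'] <-] := gammaM_witness e.
by case: (leaves_leq_metric_dominating resD domD').
Qed.

End Leaves.

Section Trees.
Variables (T : finType) (e : rel T).

Lemma adjacent_leaves_cover a b :
  symmetric e -> connected_graph e -> leaf e a -> leaf e b -> e a b ->
  forall c, (c == a) || (c == b).
Proof.
move=> e_sym conn La Lb Eab c.
have closed p x : (x == a) || (x == b) -> path e x p ->
    (last x p == a) || (last x p == b).
  elim: p x => [|y p IH] x //= Hx /andP[Exy Hp]; apply: IH Hp.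
  case/orP: Hx => /eqP ?; subst x.
    by rewrite (leaf_neighbor_uniq La Exy Eab) eqxx orbT.
  by rewrite (leaf_neighbor_uniq Lb Exy (_ : e b a)) ?eqxx // e_sym.
have /connectP[p Hp ->] := conn a c.
by apply: closed Hp; rewrite eqxx.
Qed.

Lemma tree_leaves_nonadj : is_tree e -> ~ iso_P2 e ->
  forall a b, leaf e a -> leaf e b -> ~~ e a b.
Proof.
case=> _ [e_sym e_irr] conn _ not_P2 a b La Lb; apply/negP => Eab; apply: not_P2.
have ab := adj_neq e_irr Eab.
have cover := adjacent_leaves_cover e_sym conn La Lb Eab.
have ba : (b == a) = false by rewrite eq_sym (negbTE ab).
exists (fun x => if x == a then ord0 else ord_max); split.
  exists (fun i : 'I_2 => if i == ord0 then a else b).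
    by move=> x; case/orP: (cover x) => /eqP->; rewrite ?eqxx // ba.
  case=> [[|[|k]] lt_k] //=.
    by rewrite eqxx; apply/val_inj.
  by rewrite ba; apply/val_inj.
move=> x y; case/orP: (cover x) => /eqP->; case/orP: (cover y) => /eqP->;
  by rewrite ?eqxx ?ba ?e_irr ?Eab // e_sym Eab.
Qed.

Lemma leaf_card_gt2 a : symmetric e -> irreflexive e ->
  (forall x y, leaf e x -> leaf e y -> ~~ e x y) -> leaf e a -> 2 < #|T|.
Proof.
move=> e_sym e_irr nonadj La; have Eas := support_ofP La.
have Ls : ~~ leaf e (support_of e a).
  by apply/negP => Ls; move: (nonadj _ _ La Ls); rewrite Eas.
have Esa : e (support_of e a) a by rewrite e_sym.
have [c Esc ca] := nonleaf_other_neighbor Ls Esa.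
have acs : uniq [:: a; support_of e a; c].
  by rewrite /= !inE !negb_or (adj_neq e_irr Eas) (adj_neq e_irr Esc) (eq_sym a c) ca.
by rewrite cardE; apply: (uniq_leq_size acs) => y _; rewrite mem_enum.
Qed.

Lemma leafless_conditions_fail : 0 < #|T| -> (forall a, ~~ leaf e a) ->
  [/\ gamma e <> #|support_set e|, gammaM e <> nleaves e & ~ within2_of_leaf e].
Proof.
move=> T_gt0 leafless.
have S0 : support_set e = set0.
  apply/setP => x; rewrite !inE; apply/negbTE/existsP => -[y /andP[Ly _]].
  by rewrite (negbTE (leafless y)) in Ly.
have L0 : nleaves e = 0.
  by apply/eqP; rewrite cards_eq0; apply/eqP/setP => x; rewrite !inE (negbTE (leafless x)).
split.
- have [D domD <-] := gamma_witness e; rewrite S0 cards0.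
  by apply/eqP; rewrite -lt0n (dominating_card_gt0 T_gt0 domD).
- have [D /andP[_ domD] <-] := gammaM_witness e; rewrite L0.
  by apply/eqP; rewrite -lt0n (dominating_card_gt0 T_gt0 domD).
- case/card_gt0P: T_gt0 => x _ near; have [w Lw _] := near x.
  by rewrite (negbTE (leafless w)) in Lw.
Qed.

End Trees.

Theorem theorem4 (T : finType) (e : rel T) :
  is_tree e -> ~ iso_P2 e ->
  [/\ (gammaM e = nleaves e <-> gamma e = #|support_set e|),
      (gamma e = #|support_set e| <->
         forall u : T, exists2 w : T, leaf e w & dist e u w <= 2)
    & (gammaM e = nleaves e <->
         forall u : T, exists2 w : T, leaf e w & dist e u w <= 2)].
Proof.
move=> tree not_P2; have nonadj := tree_leaves_nonadj tree not_P2.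
case: tree => T_gt0 [e_sym e_irr] _ e_acyclic.
have [/existsP[a La] | /existsPn leafless] := boolP [exists a, leaf e a].
  have card_gt2 := leaf_card_gt2 e_sym e_irr nonadj La.
  have gamma_iff := gamma_support_iff e_sym nonadj card_gt2.
  have gammaM_iff := gammaM_leaves_iff e_sym nonadj e_irr card_gt2 e_acyclic.
  by split=> //; split=> [/gammaM_iff/gamma_iff | /gamma_iff/gammaM_iff].
have [gamma_neq gammaM_neq not_within2] := leafless_conditions_fail T_gt0 leafless.
by split; split=> H; exfalso; auto.
Qed.
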